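(* For every $n$-outcome forecast domain $\mathcal{D}$, the quadratic scoring rule $s(\mathbf{p};j)=2p_j-\sum_{k=1}^n p_k^2$ on $\mathcal{D}$ has convex exposure.
   Context: $\Delta^n$ is the standard simplex in $\mathbb{R}^n$; an $n$-outcome forecast domain is a convex $(n-1)$-dimensional subset of $\Delta^n$. For a proper scoring rule $s$ with expected reward function $G(\mathbf{p})=\sum_j p_j s(\mathbf{p};j)$ (here $G(\mathbf{p})=\sum_j p_j^2$), the exposure function is $\mathbf{g}=\nabla G$, with values understood modulo translation by the all-ones vector (equivalently projected onto $\{\mathbf{x}:\sum_i x_i=0\}$). Convex exposure means the range of $\mathbf{g}$ on $\mathcal{D}$ is a convex set. *)

From HB Require Import structures.
From mathcomp Require Import all_boot all_order all_algebra.
From mathcomp Require Import all_classical all_reals all_analysis.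
Set Implicit Arguments. Unset Strict Implicit. Unset Printing Implicit Defensive.
Import Order.TTheory GRing.Theory Num.Theory.
Local Open Scope classical_set_scope.
Local Open Scope ring_scope.

Definition vec (R : realType) (n : nat) := 'I_n -> R.

Definition simplex (R : realType) (n : nat) : set (vec R n) :=
  [set p | (forall i, 0 <= p i) /\ \sum_(i < n) p i = 1].

Definition convex_set_vec (R : realType) (n : nat) (A : set (vec R n)) : Prop :=
  forall x y : vec R n, A x -> A y -> forall t : R, 0 <= t <= 1 ->
    A (fun i => t * x i + (1 - t) * y i).

Definition aff_indep (R : realType) (n m : nat) (x : 'I_m -> vec R n) : Prop :=
  forall c : 'I_m -> R,
    (forall i, \sum_(k < m) c k * x k i = 0) -> \sum_(k < m) c k = 0 ->
    forall k, c k = 0.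

(* An n-outcome forecast domain: a convex subset of Delta^n of affine
   dimension n-1, i.e. containing n affinely independent points (this is the
   maximal possible affine dimension of a subset of Delta^n). *)
Definition forecast_domain (R : realType) (n : nat) (D : set (vec R n)) : Prop :=
  D `<=` @simplex R n /\ convex_set_vec D /\
  exists x : 'I_n -> vec R n, (forall k, D (x k)) /\ aff_indep x.

(* Scoring rules: s p j = reward of report p when outcome j occurs. *)
Definition scoring_rule (R : realType) (n : nat) := vec R n -> 'I_n -> R.

Definition quadratic_rule (R : realType) (n : nat) : scoring_rule R n :=
  fun p j => 2 * p j - \sum_(k < n) p k ^+ 2.

Definition expected_reward (R : realType) (n : nat) (s : scoring_rule R n)
  (p : vec R n) : R := \sum_(j < n) p j * s p j.

Definition unit_vec (R : realType) (n : nat) (i : 'I_n) : vec R n :=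
  fun k => (k == i)%:R.

Definition gradient (R : realType) (n : nat) (G : vec R n -> R) (p : vec R n)
  : vec R n :=
  fun i => derive1 (fun t : R => G (fun k => p k + t * @unit_vec R n i k)) 0.

Definition proj0 (R : realType) (n : nat) (x : vec R n) : vec R n :=
  fun i => x i - (\sum_(k < n) x k) / n%:R.

(* Exposure function g = grad G, taken modulo the all-ones vector. *)
Definition exposure (R : realType) (n : nat) (s : scoring_rule R n)
  (p : vec R n) : vec R n := proj0 (gradient (expected_reward s) p).

Definition convex_exposure (R : realType) (n : nat) (s : scoring_rule R n)
  (D : set (vec R n)) : Prop :=
  convex_set_vec [set exposure s p | p in D].

From mathcomp Require Import all_boot all_order all_algebra.
From mathcomp Require Import all_classical all_reals all_analysis.
From mathcomp Require Import ring lra.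
Import Order.TTheory GRing.Theory Num.Theory.
Local Open Scope classical_set_scope.
Local Open Scope ring_scope.

(* The expected reward of the quadratic rule is G(p) = (2 - sum p) * sum p^2,
   with gradient 2 (2 - sum p) p - (sum p^2) 1.  On the simplex sum p = 1, so
   modulo the all-ones vector the exposure is the affine map p |-> 2p - 2/n,
   and an affine image of a convex set is convex. *)

Section QuadraticExposure.
Context {R : realType} {n : nat}.

Lemma derive1_cubic_at0 (a b c : R) :
  derive1 (fun t : R => (a - t) * (b + c * t + t ^+ 2)) 0 = a * c - b.
Proof.
rewrite derive1E.
have D : is_derive (0 : R) 1 (fun t : R => (a - t) * (b + c * t + t ^+ 2))
                   (a * c - b).
  by apply: is_derive_eq; rewrite /GRing.scale /=; ring.
exact: derive_val.
Qed.

Lemma sum_add_unit_vec (p : vec R n) (i : 'I_n) (t : R) :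
  \sum_(k < n) (p k + t * @unit_vec R n i k) = \sum_(k < n) p k + t.
Proof.
rewrite big_split /=; congr (_ + _).
rewrite (bigD1 i) //= big1 ?addr0 /unit_vec ?eqxx ?mulr1 //.
by move=> k /negbTE ->; rewrite mulr0.
Qed.

Lemma sumsq_add_unit_vec (p : vec R n) (i : 'I_n) (t : R) :
  \sum_(k < n) (p k + t * @unit_vec R n i k) ^+ 2
  = \sum_(k < n) p k ^+ 2 + 2 * p i * t + t ^+ 2.
Proof.
rewrite (bigD1 i) //= [in RHS](bigD1 i) //= /unit_vec eqxx mulr1.
rewrite (eq_bigr (fun k => p k ^+ 2)); last first.
  by move=> k /negbTE ->; rewrite mulr0 addr0.
ring.
Qed.

Lemma expected_reward_quadratic (p : vec R n) :
  expected_reward (@quadratic_rule R n) p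
  = (2 - \sum_(k < n) p k) * \sum_(k < n) p k ^+ 2.
Proof.
rewrite /expected_reward /quadratic_rule mulrBl mulr_suml mulr_sumr -sumrB.
by apply: eq_bigr => k _; rewrite expr2; ring.
Qed.

Lemma gradient_expected_reward_quadratic (p : vec R n) (i : 'I_n) :
  gradient (expected_reward (@quadratic_rule R n)) p i
  = (2 - \sum_(k < n) p k) * (2 * p i) - \sum_(k < n) p k ^+ 2.
Proof.
rewrite /gradient -derive1_cubic_at0; congr derive1; apply/funext => t.
by rewrite expected_reward_quadratic sum_add_unit_vec sumsq_add_unit_vec opprD addrA.
Qed.

Lemma proj0_affine (a c : R) (x : vec R n) :
  proj0 (fun i => a * x i + c) = fun i => a * proj0 x i.
Proof.
apply/funext => i; rewrite /proj0 big_split /= -mulr_sumr sumr_const card_ord.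
have n_gt0 : (0 < n)%N by case: n i => [[]|].
have nR_neq0 : n%:R != 0 :> R by rewrite pnatr_eq0 -lt0n.
by rewrite -mulr_natr; field.
Qed.

Lemma exposure_quadratic_simplex (p : vec R n) : simplex p ->
  exposure (@quadratic_rule R n) p = fun i => 2 * p i - 2 / n%:R.
Proof.
move=> [_ sum_p1]; rewrite /exposure.
have -> : gradient (expected_reward (@quadratic_rule R n)) p
          = fun i => 2 * p i + - \sum_(k < n) p k ^+ 2.
  by apply/funext => i; rewrite gradient_expected_reward_quadratic sum_p1; ring.
rewrite proj0_affine; apply/funext => i.
by rewrite /proj0 sum_p1; ring.
Qed.

Lemma convex_image_affine (a : R) (b : vec R n) (A : set (vec R n)) :
  convex_set_vec A -> convex_set_vec [set (fun i => a * p i + b i) | p in A].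
Proof.
move=> cvxA _ _ [p Ap <-] [q Aq <-] t t01.
exists (fun i => t * p i + (1 - t) * q i); first exact: cvxA.
by apply/funext => i; ring.
Qed.

End QuadraticExposure.

Theorem propositionF3 (R : realType) (n : nat) (D : set (vec R n)) :
  forecast_domain D -> convex_exposure (@quadratic_rule R n) D.
Proof.
move=> [D_simplex [D_convex _]].
rewrite /convex_exposure.
rewrite (eq_imagel (fun p Dp => exposure_quadratic_simplex p (D_simplex p Dp))).
exact: (convex_image_affine 2 (fun=> - (2 / n%:R))).
Qed.
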